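(* The function $f(n)=\lfloor n/2\rfloor$ (division by two) is not strictly definable.
   Context: We work in the simply typed $\lambda$-calculus (type assignment to untyped $\lambda$-terms) with a single base type $o$, with $\beta\eta$-conversion as equality. For a type $\tau$, $\omega_\tau=(\tau\to\tau)\to\tau\to\tau$. The Church numeral of $n$ is $\rho(n)=\lambda f x.f^{n}x$. A function $f:\mathbb{N}^k\to\mathbb{N}$ is strictly definable if there exist a type $\tau$ and a term $E$ with $\vdash E:\omega_\tau\to\cdots\to\omega_\tau\to\omega_\tau$ ($k$ arguments) such that $E\,\rho(n_1)\cdots\rho(n_k)=_{\beta\eta}\rho(f(n_1,\dots,n_k))$ for all $n_1,\dots,n_k$. *)

(* simply typed lambda calculus a la Curry (type assignment to
   untyped de Bruijn terms), single base type o, beta-eta conversion. *)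
From Stdlib Require Import List Arith.
Import ListNotations.

Inductive ty : Type :=
| o : ty
| Arr : ty -> ty -> ty.

Inductive term : Type :=
| Var : nat -> term
| App : term -> term -> term
| Lam : term -> term.

Fixpoint lift (d c : nat) (t : term) : term :=
  match t with
  | Var n => if n <? c then Var n else Var (n + d)
  | App a b => App (lift d c a) (lift d c b)
  | Lam a => Lam (lift d (S c) a)
  end.

Fixpoint subst (k : nat) (u : term) (t : term) : term :=
  match t with
  | Var n => if n =? k then lift k 0 u
             else if k <? n then Var (n - 1) else Var n
  | App a b => App (subst k u a) (subst k u b)
  | Lam a => Lam (subst (S k) u a)
  end.

Inductive step : term -> term -> Prop :=
| st_beta : forall t u, step (App (Lam t) u) (subst 0 u t)
| st_eta : forall t, step (Lam (App (lift 1 0 t) (Var 0))) t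
| st_appl : forall a a' b, step a a' -> step (App a b) (App a' b)
| st_appr : forall a b b', step b b' -> step (App a b) (App a b')
| st_lam : forall a a', step a a' -> step (Lam a) (Lam a').

Inductive conv : term -> term -> Prop :=
| cv_step : forall a b, step a b -> conv a b
| cv_refl : forall a, conv a a
| cv_sym : forall a b, conv a b -> conv b a
| cv_trans : forall a b c, conv a b -> conv b c -> conv a c.

Inductive has_type : list ty -> term -> ty -> Prop :=
| ty_var : forall G n A, nth_error G n = Some A -> has_type G (Var n) A
| ty_lam : forall G t A B, has_type (A :: G) t B -> has_type G (Lam t) (Arr A B)
| ty_app : forall G t u A B,
    has_type G t (Arr A B) -> has_type G u A -> has_type G (App t u) B.

Definition omega (tau : ty) : ty := Arr (Arr tau tau) (Arr tau tau).

Definition church (n : nat) : term :=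
  Lam (Lam (Nat.iter n (fun t => App (Var 1) t) (Var 0))).

Fixpoint arrows (k : nat) (tau : ty) : ty :=
  match k with
  | 0 => omega tau
  | S k' => Arr (omega tau) (arrows k' tau)
  end.

Definition apps (E : term) (args : list term) : term :=
  fold_left App args E.

Definition strictly_definable (k : nat) (f : list nat -> nat) : Prop :=
  exists (tau : ty) (E : term),
    has_type [] E (arrows k tau) /\
    forall ns : list nat, length ns = k ->
      conv (apps E (map church ns)) (church (f ns)).

(* Interpret typed terms in the full type hierarchy over [o := bool], where every type
   denotes a finite set.  Typed terms that are beta-eta convertible have a common reduct
   (Church-Rosser) and reduction preserves typing and denotation, so if [E] defined
   halving, [half := [[E]]] would satisfy [half (c n) = c (n/2)], where [c n] is the
   denotation [f, x |-> f^n x] of the numeral [n] at [omega tau].  As [c] ranges over a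
   finite set, [c i = c j] for some [i < j], and since [c (n+1)] is a function of [c n],
   [c] has period [P = j - i] from [i] on.  Halving transports this to period [P/2]:
   [c n = half (c (2n)) = half (c (2n + P)) = c (n + P/2)].  Descending to period 1 gives
   [c n = c (n+1)], which is refuted by applying both numerals to negation. *)

From Pilot Require Import Defs.
From Stdlib Require Import List Arith Lia Relations.
Import ListNotations.

Notation star R := (clos_refl_trans _ R).

Section AbstractRewriting.

Context {A : Type}.
Implicit Types R S P : relation A.

Definition diamond R :=
  forall x y1 y2, R x y1 -> R x y2 -> exists z, R y1 z /\ R y2 z.

Definition confluent R := diamond (star R).

Definition commute R S :=
  forall x y z, star R x y -> star S x z -> exists w, star S y w /\ star R z w.

Lemma star_incl {R S} : inclusion A R (star S) -> inclusion A (star R) (star S).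
Proof.
  intros HRS x y H; induction H; eauto using rt_refl, rt_trans.
Qed.

Lemma star_map {B : Type} (f : A -> B) {R} {R' : relation B} :
  (forall x y, R x y -> R' (f x) (f y)) ->
  forall x y, star R x y -> star R' (f x) (f y).
Proof.
  intros Hf x y H; induction H; eauto using rt_step, rt_refl, rt_trans.
Qed.

Lemma diamond_strip {R} :
  diamond R -> forall x y1 y2, R x y1 -> star R x y2 -> exists z, star R y1 z /\ R y2 z.
Proof.
  intros HR x y1 y2 H1 H2; revert y1 H1.
  induction H2 as [x y2 H2|x|x y z _ IH1 _ IH2]; intros y1 H1.
  - destruct (HR _ _ _ H1 H2) as [z [? ?]]; eauto using rt_step.
  - eauto using rt_refl.
  - destruct (IH1 _ H1) as [w1 [? Hw1]]; destruct (IH2 _ Hw1) as [w2 [? ?]].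
    eauto using rt_trans.
Qed.

Lemma diamond_confluent {R} : diamond R -> confluent R.
Proof.
  intros HR x y1 y2 H1; revert y2.
  induction H1 as [x y1 H1|x|x y z _ IH1 _ IH2]; intros y2 H2.
  - destruct (diamond_strip HR _ _ _ H1 H2) as [z [? ?]]; eauto using rt_step.
  - eauto using rt_refl.
  - destruct (IH1 _ H2) as [w1 [Hw1 ?]]; destruct (IH2 _ Hw1) as [w2 [? ?]].
    eauto using rt_trans.
Qed.

Lemma confluent_of_diamond {R} P :
  diamond P -> inclusion A R P -> inclusion A P (star R) -> confluent R.
Proof.
  intros HP HRP HPR x y1 y2 H1 H2.
  assert (to_P : inclusion A (star R) (star P)).
  { apply star_incl; intros u v H; apply rt_step, HRP, H. }
  assert (to_R : inclusion A (star P) (star R)) by (apply star_incl, HPR).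
  destruct (diamond_confluent HP _ _ _ (to_P _ _ H1) (to_P _ _ H2)) as [z [? ?]]; eauto.
Qed.

Lemma commute_of_local {R S} :
  (forall x y z, R x y -> S x z -> exists w, star S y w /\ clos_refl A R z w) ->
  commute R S.
Proof.
  intros Hloc.
  assert (strip : forall x y z, R x y -> star S x z ->
                  exists w, star S y w /\ clos_refl A R z w).
  { intros x y z Hxy Hxz; revert y Hxy.
    induction Hxz as [x z Hxz|x|x z1 z2 Hxz1 IH1 Hxz2 IH2]; intros y Hxy.
    - eauto.
    - eauto using rt_refl, r_step.
    - destruct (IH1 _ Hxy) as [w1 [Hyw1 Hw1]].
      revert Hyw1; destruct Hw1 as [w1 Hw1|]; intros Hyw1.
      + destruct (IH2 _ Hw1) as [w2 [? ?]]; eauto using rt_trans.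
      + eauto using rt_trans, r_refl. }
  intros x y z Hxy; revert z.
  induction Hxy as [x y Hxy|x|x y1 y2 _ IH1 _ IH2]; intros z Hxz.
  - destruct (strip _ _ _ Hxy Hxz) as [w [? ?]]; exists w; split; [|apply clos_r_clos_rt]; auto.
  - eauto using rt_refl.
  - destruct (IH1 _ Hxz) as [w1 [Hw1 ?]]; destruct (IH2 _ Hw1) as [w2 [? ?]].
    eauto using rt_trans.
Qed.

Lemma hindley_rosen {R S} :
  confluent R -> confluent S -> commute R S -> confluent (union A R S).
Proof.
  intros HR HS HRS.
  apply (confluent_of_diamond (union A (star R) (star S))).
  - intros x y1 y2 [H1|H1] [H2|H2].
    + destruct (HR _ _ _ H1 H2) as [z [? ?]]; exists z; split; left; auto.
    + destruct (HRS _ _ _ H1 H2) as [z [? ?]]; exists z; split; [right|left]; auto.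
    + destruct (HRS _ _ _ H2 H1) as [z [? ?]]; exists z; split; [left|right]; auto.
    + destruct (HS _ _ _ H1 H2) as [z [? ?]]; exists z; split; right; auto.
  - intros x y [H|H]; [left|right]; auto using rt_step.
  - intros x y [H|H]; revert H; apply star_incl; intros u v Huv; apply rt_step.
    + left; exact Huv.
    + right; exact Huv.
Qed.

End AbstractRewriting.

(** * Lifting and substitution *)

Ltac case_nat_tests :=
  repeat match goal with
  | |- context [?a <? ?b] => destruct (Nat.ltb_spec a b)
  | |- context [?a =? ?b] => destruct (Nat.eqb_spec a b)
  end.

Ltac solve_var_case :=
  repeat (simpl; case_nat_tests); simpl; try (f_equal; lia); try lia; try reflexivity.

Lemma lift_0 t c : lift 0 c t = t.
Proof.
  revert c; induction t; intros; simpl; [solve_var_case | f_equal; auto | f_equal; auto].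
Qed.

Lemma lift_lift t d d' c c' : c <= c' <= c + d ->
  lift d' c' (lift d c t) = lift (d + d') c t.
Proof.
  revert c c'; induction t; intros; simpl;
    [solve_var_case | f_equal; auto | f_equal; apply IHt; lia].
Qed.

Lemma lift_lift_comm t d d' c c' : c' <= c ->
  lift d' c' (lift d c t) = lift d (c + d') (lift d' c' t).
Proof.
  revert c c'; induction t; intros; simpl;
    [solve_var_case | f_equal; auto | f_equal; rewrite IHt by lia; reflexivity].
Qed.

Lemma lift_subst_low t u d c k : c <= k ->
  lift d c (subst k u t) = subst (k + d) u (lift d c t).
Proof.
  revert c k; induction t; intros; simpl.
  - solve_var_case; subst; rewrite lift_lift by lia; reflexivity.
  - f_equal; auto.
  - f_equal; rewrite IHt by lia; reflexivity.
Qed.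

Lemma lift_subst_high t u d c k : k <= c ->
  lift d c (subst k u t) = subst k (lift d (c - k) u) (lift d (S c) t).
Proof.
  revert c k; induction t; intros; simpl.
  - solve_var_case; subst; rewrite (lift_lift_comm u d k (c - k) 0) by lia;
      replace (c - k + k) with c by lia; reflexivity.
  - f_equal; auto.
  - f_equal; rewrite IHt by lia; reflexivity.
Qed.

Lemma subst_lift_gap t u d c k : c <= k <= c + d ->
  subst k u (lift (S d) c t) = lift d c t.
Proof.
  revert c k; induction t; intros; simpl;
    [solve_var_case | f_equal; auto | f_equal; apply IHt; lia].
Qed.

Lemma subst_subst t u v k j : k <= j ->
  subst j v (subst k u t) = subst k (subst (j - k) v u) (subst (S j) v t).
Proof.
  revert k j; induction t; intros; simpl.
  - solve_var_case; subst.
    all: try (rewrite lift_subst_low by lia; f_equal; lia).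
    all: rewrite subst_lift_gap by lia; reflexivity.
  - f_equal; auto.
  - f_equal; rewrite IHt by lia; reflexivity.
Qed.

Lemma subst_lift_var t k : subst k (Var 0) (lift 1 (S k) t) = t.
Proof.
  revert k; induction t; intros; simpl; [solve_var_case | f_equal; auto | f_equal; auto].
Qed.

Lemma lift_var_inv {d c t n} : lift d c t = Var n ->
  exists m, t = Var m /\ n = (if m <? c then m else m + d).
Proof.
  destruct t as [m| |]; simpl; intros H; try discriminate.
  exists m; split; auto; destruct (m <? c); congruence.
Qed.

Lemma lift_app_inv {d c t a b} : lift d c t = App a b ->
  exists a0 b0, t = App a0 b0 /\ a = lift d c a0 /\ b = lift d c b0.
Proof.
  destruct t as [m| |]; simpl; intros H; try discriminate.
  - destruct (m <? c); discriminate.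
  - injection H; intros; subst; eauto.
Qed.

Lemma lift_lam_inv {d c t a} : lift d c t = Lam a ->
  exists a0, t = Lam a0 /\ a = lift d (S c) a0.
Proof.
  destruct t as [m| |]; simpl; intros H; try discriminate.
  - destruct (m <? c); discriminate.
  - injection H; intros; subst; eauto.
Qed.

Lemma lift_inj d c t t' : lift d c t = lift d c t' -> t = t'.
Proof.
  revert c t'; induction t; intros c t' H; destruct t'; simpl in H; try discriminate;
  repeat match goal with H : context [?a <? ?b] |- _ => destruct (Nat.ltb_spec a b) end;
  try discriminate; try (injection H; intros; f_equal; lia);
  try (injection H; intros; f_equal; eauto).
Qed.

Lemma lift_image {x y d c k} : lift d (S (c + k)) x = lift 1 k y ->
  exists z, x = lift 1 k z /\ y = lift d (c + k) z.
Proof.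
  revert y c k; induction x as [n|x1 IH1 x2 IH2|x IH]; intros y c k H.
  - destruct y as [m| |]; simpl in H;
      repeat match goal with H : context [?a <? ?b] |- _ => destruct (Nat.ltb_spec a b) end;
      try discriminate; injection H; intros; subst; try lia.
    + exists (Var m); split; solve_var_case.
    + exists (Var m); split; solve_var_case.
    + exists (Var (n - 1)); split; solve_var_case.
  - destruct y as [m|y1 y2|]; simpl in H; try discriminate.
    + destruct (m <? k); discriminate.
    + injection H as H1 H2.
      destruct (IH1 _ _ _ H1) as [z1 [? ?]]; destruct (IH2 _ _ _ H2) as [z2 [? ?]].
      exists (App z1 z2); subst; simpl; auto.
  - destruct y as [m| |y]; simpl in H; try discriminate.
    + destruct (m <? k); discriminate.
    + injection H as H1.
      replace (S (S (c + k))) with (S (c + S k)) in H1 by lia.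
      destruct (IH _ _ _ H1) as [z [? ?]].
      exists (Lam z); subst; simpl; split; auto.
      f_equal; f_equal; lia.
Qed.

(** * Church-Rosser for beta-eta conversion *)

Inductive beta_step : term -> term -> Prop :=
| beta_redex t u : beta_step (App (Lam t) u) (subst 0 u t)
| beta_appl a a' b : beta_step a a' -> beta_step (App a b) (App a' b)
| beta_appr a b b' : beta_step b b' -> beta_step (App a b) (App a b')
| beta_lam a a' : beta_step a a' -> beta_step (Lam a) (Lam a').

Inductive eta_step : term -> term -> Prop :=
| eta_redex t : eta_step (Lam (App (lift 1 0 t) (Var 0))) t
| eta_appl a a' b : eta_step a a' -> eta_step (App a b) (App a' b)
| eta_appr a b b' : eta_step b b' -> eta_step (App a b) (App a b')
| eta_lam a a' : eta_step a a' -> eta_step (Lam a) (Lam a').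

Lemma step_beta_or_eta x y : step x y <-> union term beta_step eta_step x y.
Proof.
  split.
  - induction 1 as [| |a a' b _ [H|H]|a b b' _ [H|H]|a a' _ [H|H]];
      solve [left; constructor; auto | right; constructor; auto].
  - intros [H|H]; induction H; constructor; auto.
Qed.

Lemma star_app (R : relation term) a a' b b' :
  (forall x y z, R x y -> R (App x z) (App y z)) ->
  (forall x y z, R x y -> R (App z x) (App z y)) ->
  star R a a' -> star R b b' -> star R (App a b) (App a' b').
Proof.
  intros Hl Hr Ha Hb; apply rt_trans with (App a' b).
  - apply (star_map (fun x => App x b) (R := R)); auto.
  - apply (star_map (fun x => App a' x) (R := R)); auto.
Qed.

Lemma eta_step_lift t t' d c : eta_step t t' -> eta_step (lift d c t) (lift d c t').
Proof.
  intros H; revert c; induction H; intros; simpl; try (constructor; auto).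
  rewrite <- Nat.add_1_r, <- lift_lift_comm by lia; constructor.
Qed.

Lemma eta_step_subst t t' k u : eta_step t t' -> eta_step (subst k u t) (subst k u t').
Proof.
  intros H; revert k; induction H; intros; simpl; try (constructor; auto).
  rewrite <- Nat.add_1_r, <- lift_subst_low by lia; constructor.
Qed.

Lemma eta_steps_subst_arg t k u u' :
  eta_step u u' -> star eta_step (subst k u t) (subst k u' t).
Proof.
  intros H; revert k; induction t; intros; simpl.
  - destruct (n =? k); [apply rt_step, eta_step_lift; auto | apply rt_refl].
  - apply star_app; auto using eta_appl, eta_appr.
  - apply (star_map Lam (R := eta_step)); auto using eta_lam.
Qed.

Lemma beta_step_lift_inv {d c t N} : beta_step (lift d c t) N ->
  exists t', N = lift d c t' /\ beta_step t t'.
Proof.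
  remember (lift d c t) as M eqn:HM; intros H; revert c t HM.
  induction H; intros c t0 HM; symmetry in HM.
  - destruct (lift_app_inv HM) as [a0 [b0 [-> [Ha ->]]]].
    symmetry in Ha; destruct (lift_lam_inv Ha) as [a1 [-> ->]].
    exists (subst 0 b0 a1); split; [|constructor].
    rewrite lift_subst_high, Nat.sub_0_r by lia; reflexivity.
  - destruct (lift_app_inv HM) as [a0 [b0 [-> [-> ->]]]].
    destruct (IHbeta_step c a0 eq_refl) as [t' [-> ?]].
    exists (App t' b0); split; [reflexivity | constructor; auto].
  - destruct (lift_app_inv HM) as [a0 [b0 [-> [-> ->]]]].
    destruct (IHbeta_step c b0 eq_refl) as [t' [-> ?]].
    exists (App a0 t'); split; [reflexivity | constructor; auto].
  - destruct (lift_lam_inv HM) as [a0 [-> ->]].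
    destruct (IHbeta_step (S c) a0 eq_refl) as [t' [-> ?]].
    exists (Lam t'); split; [reflexivity | constructor; auto].
Qed.

Lemma eta_step_lift_inv {d c t N} : eta_step (lift d c t) N ->
  exists t', N = lift d c t' /\ eta_step t t'.
Proof.
  remember (lift d c t) as M eqn:HM; intros H; revert c t HM.
  induction H; intros c t0 HM; symmetry in HM.
  - destruct (lift_lam_inv HM) as [a0 [-> Ha]].
    symmetry in Ha; destruct (lift_app_inv Ha) as [a1 [b1 [-> [Ha1 Hb1]]]].
    symmetry in Hb1; destruct (lift_var_inv Hb1) as [m [-> Hm]].
    destruct (Nat.ltb_spec m (S c)); [subst m | lia].
    replace (S c) with (S (c + 0)) in Ha1 by lia; symmetry in Ha1.
    destruct (lift_image Ha1) as [z [-> ->]].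
    exists z; split; [f_equal; lia | constructor].
  - destruct (lift_app_inv HM) as [a0 [b0 [-> [-> ->]]]].
    destruct (IHeta_step c a0 eq_refl) as [t' [-> ?]].
    exists (App t' b0); split; [reflexivity | constructor; auto].
  - destruct (lift_app_inv HM) as [a0 [b0 [-> [-> ->]]]].
    destruct (IHeta_step c b0 eq_refl) as [t' [-> ?]].
    exists (App a0 t'); split; [reflexivity | constructor; auto].
  - destruct (lift_lam_inv HM) as [a0 [-> ->]].
    destruct (IHeta_step (S c) a0 eq_refl) as [t' [-> ?]].
    exists (Lam t'); split; [reflexivity | constructor; auto].
Qed.

Inductive par_beta : term -> term -> Prop :=
| par_var n : par_beta (Var n) (Var n)
| par_app a a' b b' : par_beta a a' -> par_beta b b' -> par_beta (App a b) (App a' b')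
| par_lam a a' : par_beta a a' -> par_beta (Lam a) (Lam a')
| par_redex a a' b b' :
    par_beta a a' -> par_beta b b' -> par_beta (App (Lam a) b) (subst 0 b' a').

Lemma par_beta_refl t : par_beta t t.
Proof. induction t; constructor; auto. Qed.

Lemma par_beta_lift t t' d c : par_beta t t' -> par_beta (lift d c t) (lift d c t').
Proof.
  intros H; revert c; induction H; intros; simpl; try (constructor; auto).
  - apply par_beta_refl.
  - rewrite lift_subst_high, Nat.sub_0_r by lia; constructor; auto.
Qed.

Lemma par_beta_subst t t' u u' k :
  par_beta t t' -> par_beta u u' -> par_beta (subst k u t) (subst k u' t').
Proof.
  intros H; revert k; induction H; intros k Hu; simpl; try (constructor; auto).
  - destruct (n =? k); [apply par_beta_lift; auto |].
    destruct (k <? n); apply par_beta_refl.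
  - rewrite (subst_subst a' b' u' 0 k), Nat.sub_0_r by lia; constructor; auto.
Qed.

Lemma par_beta_lam_inv {a x} : par_beta (Lam a) x -> exists a', x = Lam a' /\ par_beta a a'.
Proof. intros H; inversion H; subst; eauto. Qed.

Lemma par_beta_app_inv {a b x} : par_beta (App a b) x ->
  (exists a' b', x = App a' b' /\ par_beta a a' /\ par_beta b b') \/
  (exists a0 a0' b', a = Lam a0 /\ x = subst 0 b' a0' /\ par_beta a0 a0' /\ par_beta b b').
Proof. intros H; inversion H; subst; [left | right]; eauto 10. Qed.

Lemma par_beta_diamond : diamond par_beta.
Proof.
  intros x y1 y2 H1; revert y2; induction H1 as [n|a a1 b b1 Ha IHa Hb IHb|a a1 Ha IHa
    |a a1 b b1 Ha IHa Hb IHb]; intros y2 H2.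
  - inversion H2; subst; exists (Var n); split; constructor.
  - apply par_beta_app_inv in H2 as [[a2 [b2 [-> [Ha2 Hb2]]]]|[a0 [a2 [b2 [-> [-> [Ha2 Hb2]]]]]]].
    + destruct (IHa _ Ha2) as [qa [? ?]]; destruct (IHb _ Hb2) as [qb [? ?]].
      exists (App qa qb); split; constructor; auto.
    + destruct (par_beta_lam_inv Ha) as [a3 [-> Ha3]].
      destruct (IHa (Lam a2) (par_lam _ _ Ha2)) as [qa [Hq1 Hq2]].
      destruct (par_beta_lam_inv Hq1) as [qa' [-> ?]].
      destruct (par_beta_lam_inv Hq2) as [qa'' [E ?]]; injection E as ->.
      destruct (IHb _ Hb2) as [qb [? ?]].
      exists (subst 0 qb qa''); split; [constructor | apply par_beta_subst]; auto.
  - destruct (par_beta_lam_inv H2) as [a2 [-> Ha2]]; destruct (IHa _ Ha2) as [q [? ?]].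
    exists (Lam q); split; constructor; auto.
  - apply par_beta_app_inv in H2 as [[a2 [b2 [-> [Ha2 Hb2]]]]|[a0 [a2 [b2 [E [-> [Ha2 Hb2]]]]]]].
    + destruct (par_beta_lam_inv Ha2) as [a3 [-> Ha3]].
      destruct (IHa _ Ha3) as [qa [? ?]]; destruct (IHb _ Hb2) as [qb [? ?]].
      exists (subst 0 qb qa); split; [apply par_beta_subst | constructor]; auto.
    + injection E as ->.
      destruct (IHa _ Ha2) as [qa [? ?]]; destruct (IHb _ Hb2) as [qb [? ?]].
      exists (subst 0 qb qa); split; apply par_beta_subst; auto.
Qed.

Lemma beta_steps_of_par x y : par_beta x y -> star beta_step x y.
Proof.
  induction 1.
  - apply rt_refl.
  - apply star_app; auto using beta_appl, beta_appr.
  - apply (star_map Lam (R := beta_step)); auto using beta_lam.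
  - apply rt_trans with (App (Lam a') b').
    + apply star_app; auto using beta_appl, beta_appr.
      apply (star_map Lam (R := beta_step)); auto using beta_lam.
    + apply rt_step, beta_redex.
Qed.

Lemma beta_confluent : confluent beta_step.
Proof.
  apply (confluent_of_diamond par_beta).
  - exact par_beta_diamond.
  - intros x y H; induction H; constructor; auto using par_beta_refl.
  - exact beta_steps_of_par.
Qed.

Lemma eta_step_app_inv {a b x} : eta_step (App a b) x ->
  (exists a', x = App a' b /\ eta_step a a') \/ (exists b', x = App a b' /\ eta_step b b').
Proof. intros H; inversion H; subst; eauto. Qed.

Lemma eta_step_lam_inv {a x} : eta_step (Lam a) x ->
  a = App (lift 1 0 x) (Var 0) \/ (exists a', x = Lam a' /\ eta_step a a').
Proof. intros H; inversion H; subst; eauto. Qed.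

Lemma eta_step_var_inv {n x} : ~ eta_step (Var n) x.
Proof. intros H; inversion H. Qed.

Lemma eta_step_eta_body {t a'} : eta_step (App (lift 1 0 t) (Var 0)) a' ->
  exists t', a' = App (lift 1 0 t') (Var 0) /\ eta_step t t'.
Proof.
  intros [[x [-> Hx]]|[x [-> Hx]]]%eta_step_app_inv.
  - destruct (eta_step_lift_inv Hx) as [t' [-> ?]]; eauto.
  - destruct (eta_step_var_inv Hx).
Qed.

Lemma eta_step_local_diamond x y1 y2 : eta_step x y1 -> eta_step x y2 ->
  exists z, clos_refl term eta_step y1 z /\ clos_refl term eta_step y2 z.
Proof.
  intros H1; revert y2.
  induction H1 as [t|a a' b H1 IH|a b b' H1 IH|a a' H1 IH]; intros y2 H2.
  - apply eta_step_lam_inv in H2 as [E|[a' [-> Ha]]].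
    + injection E as E; apply lift_inj in E as ->; exists y2; split; apply r_refl.
    + destruct (eta_step_eta_body Ha) as [t' [-> ?]].
      exists t'; split; apply r_step; [auto | constructor].
  - apply eta_step_app_inv in H2 as [[x [-> Hx]]|[x [-> Hx]]].
    + destruct (IH _ Hx) as [q [Hq1 Hq2]].
      exists (App q b); split; [destruct Hq1 | destruct Hq2];
        solve [apply r_refl | apply r_step; constructor; auto].
    + exists (App a' x); split; apply r_step; constructor; auto.
  - apply eta_step_app_inv in H2 as [[x [-> Hx]]|[x [-> Hx]]].
    + exists (App x b'); split; apply r_step; constructor; auto.
    + destruct (IH _ Hx) as [q [Hq1 Hq2]].
      exists (App a q); split; [destruct Hq1 | destruct Hq2];
        solve [apply r_refl | apply r_step; constructor; auto].
  - apply eta_step_lam_inv in H2 as [->|[x [-> Hx]]].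
    + destruct (eta_step_eta_body H1) as [t' [-> ?]].
      exists t'; split; apply r_step; [constructor | auto].
    + destruct (IH _ Hx) as [q [Hq1 Hq2]].
      exists (Lam q); split; [destruct Hq1 | destruct Hq2];
        solve [apply r_refl | apply r_step; constructor; auto].
Qed.

Lemma eta_confluent : confluent eta_step.
Proof.
  apply (confluent_of_diamond (clos_refl term eta_step)).
  - intros x y1 y2 [y1' H1|] [y2' H2|]; eauto using eta_step_local_diamond, r_step, r_refl.
  - intros x y H; apply r_step, H.
  - exact (clos_r_clos_rt term eta_step).
Qed.

Lemma beta_step_app_inv {a b x} : beta_step (App a b) x ->
  (exists a0, a = Lam a0 /\ x = subst 0 b a0) \/
  (exists a', x = App a' b /\ beta_step a a') \/ (exists b', x = App a b' /\ beta_step b b').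
Proof. intros H; inversion H; subst; eauto. Qed.

Lemma beta_step_eta_body {t a'} : beta_step (App (lift 1 0 t) (Var 0)) a' ->
  (exists t', a' = App (lift 1 0 t') (Var 0) /\ beta_step t t') \/ t = Lam a'.
Proof.
  intros [[a0 [Ht ->]]|[[x [-> Hx]]|[x [-> Hx]]]]%beta_step_app_inv.
  - right; destruct (lift_lam_inv Ht) as [a1 [-> ->]]; rewrite subst_lift_var; reflexivity.
  - destruct (beta_step_lift_inv Hx) as [t' [-> ?]]; eauto.
  - inversion Hx.
Qed.

Lemma beta_eta_local_commute M P N : beta_step M P -> eta_step M N ->
  exists Q, star eta_step P Q /\ clos_refl term beta_step N Q.
Proof.
  intros H; revert N; induction H as [t u|a a' b H IH|a b b' H IH|a a' H IH]; intros N HN.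
  - apply eta_step_app_inv in HN as [[x [-> Hx]]|[x [-> Hx]]].
    + apply eta_step_lam_inv in Hx as [->|[a' [-> Ha]]].
      * exists (App x u); split; [|apply r_refl].
        simpl; rewrite (subst_lift_gap x u 0 0 0), !lift_0 by lia; apply rt_refl.
      * exists (subst 0 u a'); split.
        -- apply rt_step, eta_step_subst; auto.
        -- apply r_step, beta_redex.
    + exists (subst 0 x t); split; [apply eta_steps_subst_arg; auto | apply r_step, beta_redex].
  - apply eta_step_app_inv in HN as [[x [-> Hx]]|[x [-> Hx]]].
    + destruct (IH _ Hx) as [q [Hq1 Hq2]]; exists (App q b); split.
      * apply (star_map (fun x => App x b) (R := eta_step)); auto using eta_appl.
      * destruct Hq2; [apply r_step, beta_appl; auto | apply r_refl].
    + exists (App a' x); split; apply rt_step || apply r_step; constructor; auto.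
  - apply eta_step_app_inv in HN as [[x [-> Hx]]|[x [-> Hx]]].
    + exists (App x b'); split; apply rt_step || apply r_step; constructor; auto.
    + destruct (IH _ Hx) as [q [Hq1 Hq2]]; exists (App a q); split.
      * apply (star_map (fun x => App a x) (R := eta_step)); auto using eta_appr.
      * destruct Hq2; [apply r_step, beta_appr; auto | apply r_refl].
  - apply eta_step_lam_inv in HN as [->|[x [-> Hx]]].
    + destruct (beta_step_eta_body H) as [[t' [-> ?]]| ->].
      * exists t'; split; [apply rt_step, eta_redex | apply r_step; auto].
      * exists (Lam a'); split; [apply rt_refl | apply r_refl].
    + destruct (IH _ Hx) as [q [Hq1 Hq2]]; exists (Lam q); split.
      * apply (star_map Lam (R := eta_step)); auto using eta_lam.
      * destruct Hq2; [apply r_step, beta_lam; auto | apply r_refl].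
Qed.

Lemma step_confluent : confluent step.
Proof.
  assert (Hstar : forall x y, star step x y <-> star (union term beta_step eta_step) x y).
  { split; apply star_incl; intros u v H; apply rt_step, step_beta_or_eta, H. }
  intros x y1 y2 H1%Hstar H2%Hstar.
  destruct (hindley_rosen beta_confluent eta_confluent
              (commute_of_local beta_eta_local_commute) _ _ _ H1 H2) as [z [Hz1 Hz2]].
  exists z; split; apply Hstar; assumption.
Qed.

Lemma conv_join a b : conv a b -> exists c, star step a c /\ star step b c.
Proof.
  induction 1 as [a b H|a|a b _ [c [? ?]]|a b c _ [c1 [? ?]] _ [c2 [? ?]]].
  - exists b; split; [apply rt_step, H | apply rt_refl].
  - exists a; split; apply rt_refl.
  - eauto.
  - destruct (step_confluent b c1 c2) as [d [? ?]]; auto.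
    exists d; split; eapply rt_trans; eauto.
Qed.

(** * Numerals and halving *)

Definition church_body (m : nat) : term := Nat.iter m (fun t => App (Var 1) t) (Var 0).

Lemma church_body_normal m x : ~ step (church_body m) x.
Proof.
  unfold church_body; revert x; induction m as [|m IH]; simpl; intros x H.
  - inversion H.
  - inversion H as [| | a a' b Ha | a b b' Hb |]; subst; [inversion Ha | eapply IH; eauto].
Qed.

Lemma church_step_inv {m x} : step (church m) x -> m = 1 /\ x = Lam (Var 0).
Proof.
  intros H; inversion H as [| | | |a a' Hinner]; subst; clear H.
  inversion Hinner as [|t E| | |b b' Hbody]; subst.
  - destruct m as [|[|m]]; simpl in E; try discriminate.
    injection E as E; destruct (lift_var_inv E) as [[|k] [-> Hk]]; [auto | simpl in Hk; lia].
  - destruct (church_body_normal _ _ Hbody).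
Qed.

Lemma church_reducts {m x} :
  star step (church m) x -> x = church m \/ (m = 1 /\ x = Lam (Var 0)).
Proof.
  intros H; apply clos_rt_rt1n in H.
  remember (church m) as c eqn:Ec; induction H as [|x y z Hxy Hyz IH]; subst; auto.
  destruct (church_step_inv Hxy) as [-> ->].
  inversion Hyz as [|y w Hyw]; subst; auto.
  inversion Hyw as [| | | |a a' Ha]; inversion Ha.
Qed.

Lemma div2_double_add n p : Nat.div2 (2 * n + p) = n + Nat.div2 p.
Proof. rewrite !Nat.div2_div, Nat.mul_comm, Nat.div_add_l by lia; reflexivity. Qed.

Section Halving.

Context {T : Type}.
Variables (a : nat -> T) (succ half : T -> T).
Hypothesis a_succ : forall n, a (S n) = succ (a n).
Hypothesis a_half : forall n, half (a n) = a (Nat.div2 n).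
Hypothesis a_neq_succ : forall n, a n <> a (S n).

Definition periodic_from (N P : nat) := forall n, N <= n -> a n = a (n + P).

Lemma periodic_from_eq i j : i <= j -> a i = a j -> periodic_from i (j - i).
Proof.
  intros Hle Hij n Hn.
  replace n with (i + (n - i)) by lia; replace (i + (n - i) + (j - i)) with (j + (n - i)) by lia.
  generalize (n - i) as t; induction t as [|t IH].
  - rewrite !Nat.add_0_r; exact Hij.
  - rewrite !Nat.add_succ_r, !a_succ, IH; reflexivity.
Qed.

Lemma periodic_from_half N P : periodic_from N P -> periodic_from N (Nat.div2 P).
Proof.
  intros HP n Hn.
  transitivity (a (Nat.div2 (2 * n))); [rewrite Nat.div2_double; reflexivity |].
  rewrite <- a_half, HP, a_half, div2_double_add by lia; reflexivity.
Qed.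

Lemma not_periodic_from N P : 0 < P -> ~ periodic_from N P.
Proof.
  induction P as [P IH] using (well_founded_induction lt_wf); intros HP Hper.
  destruct (Nat.eq_dec P 1) as [->|HP1].
  - apply (a_neq_succ N); rewrite Hper, Nat.add_1_r by lia; reflexivity.
  - apply (IH (Nat.div2 P)).
    + apply Nat.lt_div2; lia.
    + destruct P as [|[|P]]; [lia | lia | apply Nat.lt_0_succ].
    + apply periodic_from_half, Hper.
Qed.

Lemma halving_injective i j : a i = a j -> i = j.
Proof.
  intros Hij; destruct (Nat.lt_trichotomy i j) as [Hlt|[->|Hlt]]; auto; exfalso.
  - apply (not_periodic_from i (j - i)); [lia | apply periodic_from_eq; auto; lia].
  - apply (not_periodic_from j (i - j)); [lia | apply periodic_from_eq; auto; lia].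
Qed.

End Halving.

(** * The full type hierarchy over the booleans *)

From mathcomp Require Import ssreflect ssrfun ssrbool eqtype ssrnat fintype finfun zify.
From Stdlib Require Import FunctionalExtensionality Eqdep_dec.

Lemma nat_not_injective_fin (T : finType) (a : nat -> T) : ~ injective a.
Proof.
  move=> inj_a.
  have inj_a' : injective (fun i : 'I_#|T|.+1 => a i) by move=> i j /inj_a /val_inj.
  by have := leq_card _ inj_a'; rewrite card_ord ltnn.
Qed.

Definition ty_eq_dec (A B : ty) : {A = B} + {A <> B}.
Proof. decide equality. Defined.

Fixpoint sem (A : ty) : finType :=
  match A with o => bool | Arr A B => {ffun sem A -> sem B} end.

Fixpoint inhabitant (A : ty) : sem A :=
  match A return sem A with o => false | Arr _ B => [ffun => inhabitant B] end.

(* An environment gives each index a value at every type, so that it need not be indexed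
   by a typing context; a derivation only ever reads it at the type the context assigns. *)
Definition env := forall A : ty, nat -> sem A.

Definition cast (A B : ty) (v : sem A) : sem B :=
  match ty_eq_dec A B with left e => eq_rect A sem v B e | right _ => inhabitant B end.

Lemma cast_id A v : cast A A v = v.
Proof.
  rewrite /cast; case: (ty_eq_dec A A) => [e|//].
  by rewrite (UIP_dec ty_eq_dec e (erefl A)).
Qed.

Definition env_cons A (v : sem A) (r : env) : env :=
  fun B n => if n is m.+1 then r B m else cast A B v.

Definition env_shift (c d : nat) (r : env) : env :=
  fun B n => if n <? c then r B n else r B (n + d).

Definition env_insert (k : nat) U (v : sem U) (r : env) : env :=
  fun B n => if n <? k then r B n else if n =? k then cast U B v else r B (n - 1).

Definition env_drop (k : nat) (r : env) : env := fun B n => r B (n + k).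

Lemma env_ext (r r' : env) : (forall B n, r B n = r' B n) -> r = r'.
Proof. by move=> H; do 2 (apply: functional_extensionality_dep => ?); apply: H. Qed.

Lemma env_shift_cons c d A v r :
  env_shift c.+1 d (env_cons A v r) = env_cons A v (env_shift c d r).
Proof. by apply: env_ext => B [|n]. Qed.

Lemma env_drop_cons k A v r : env_drop k.+1 (env_cons A v r) = env_drop k r.
Proof. by apply: env_ext => B n; rewrite /env_drop addnS. Qed.

Lemma env_insert_cons k U w A v r :
  env_insert k.+1 U w (env_cons A v r) = env_cons A v (env_insert k U w r).
Proof.
  apply: env_ext => B [|n] //; rewrite /env_insert /=.
  rewrite (_ : (n.+1 <? k.+1) = (n <? k)) //.
  case: (Nat.ltb_spec n k) => // Hnk; case: (Nat.eqb_spec n k) => // Hne.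
  by case: n Hnk Hne => [|n] *; [lia | rewrite !subn1].
Qed.

Lemma env_insert0 U v r : env_insert 0 U v r = env_cons U v r.
Proof. by apply: env_ext => B [|n] //; rewrite /env_insert /= subn1. Qed.

Lemma env_drop0 r : env_drop 0 r = r.
Proof. by apply: env_ext => B n; rewrite /env_drop addn0. Qed.

Lemma env_shift_cons0 A v r : env_shift 0 1 (env_cons A v r) = r.
Proof. by apply: env_ext => B n; rewrite /env_shift /= addn1. Qed.

Inductive deriv : list ty -> term -> ty -> Type :=
| deriv_var G n A : nth_error G n = Some A -> deriv G (Var n) A
| deriv_lam G t A B : deriv (A :: G) t B -> deriv G (Lam t) (Arr A B)
| deriv_app G t u A B : deriv G t (Arr A B) -> deriv G u A -> deriv G (App t u) B.

Arguments deriv_var {G n A}.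
Arguments deriv_lam {G t A B}.
Arguments deriv_app {G t u A B}.

Lemma has_type_deriv {G t A} : has_type G t A -> inhabited (deriv G t A).
Proof.
  elim=> [{}G n {}A e|{}G {}t {}A B _ [d]|{}G {}t u {}A B _ [d1] _ [d2]].
  - exact: inhabits (deriv_var e).
  - exact: inhabits (deriv_lam d).
  - exact: inhabits (deriv_app d1 d2).
Qed.

Fixpoint denote {G t A} (d : deriv G t A) (r : env) : sem A :=
  match d in deriv G t A return sem A with
  | @deriv_var _ n A _ => r A n
  | @deriv_lam _ _ A _ d' => [ffun v => denote d' (env_cons A v r)]
  | @deriv_app _ _ _ _ _ d1 d2 => (denote d1 r) (denote d2 r)
  end.

Lemma deriv_var_inv {G n A} (d : deriv G (Var n) A) :
  nth_error G n = Some A /\ forall r, denote d r = r A n.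
Proof.
  remember (Var n) as M eqn:E; case: d E => // {}G m {}A e [Em]; subst m.
  by split.
Qed.

Lemma deriv_lam_inv {G t A B} (d : deriv G (Lam t) (Arr A B)) :
  exists d' : deriv (A :: G) t B, forall r, denote d r = [ffun v => denote d' (env_cons A v r)].
Proof.
  have gen : forall G M C (d : deriv G M C) t A B (eM : M = Lam t) (eC : C = Arr A B),
      exists d' : deriv (A :: G) t B, forall r,
        eq_rect C sem (denote d r) (Arr A B) eC = [ffun v => denote d' (env_cons A v r)].
  { move=> G0 M C [|G0' t0 A0 B0 d0|] // t' A' B' [Et] eC; subst t'.
    case: (eC) => EA EB; subst A' B'.
    by rewrite (UIP_dec ty_eq_dec eC erefl); exists d0. }
  exact: (gen G (Lam t) (Arr A B) d t A B erefl erefl).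
Qed.

Lemma deriv_app_inv {G a b A} (d : deriv G (App a b) A) :
  exists U (d1 : deriv G a (Arr U A)) (d2 : deriv G b U),
    forall r, denote d r = (denote d1 r) (denote d2 r).
Proof.
  remember (App a b) as M eqn:E; case: d E => // {}G a' b' U {}A d1 d2 [Ea Eb]; subst a' b'.
  by exists U, d1, d2.
Qed.

Lemma deriv_lift G1 G2 D {t A} (d : deriv (G1 ++ G2) t A) :
  exists d' : deriv (G1 ++ D ++ G2) (Defs.lift (length D) (length G1) t) A,
    forall r, denote d' r = denote d (env_shift (length G1) (length D) r).
Proof.
  remember (G1 ++ G2) as G eqn:HG; revert G1 HG.
  induction d as [G n A e|G t A B d IH|G t u A B d1 IH1 d2 IH2]; intros G1 HG; subst G.
  - simpl; destruct (Nat.ltb_spec n (length G1)) as [Hn|Hn].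
    + assert (e' : nth_error (G1 ++ D ++ G2) n = Some A).
      { by rewrite nth_error_app1 // -(nth_error_app1 _ G2 Hn). }
      exists (deriv_var e') => r /=; rewrite /env_shift.
      by case: (Nat.ltb_spec n (length G1)) => // ?; lia.
    + assert (e' : nth_error (G1 ++ D ++ G2) (n + length D) = Some A).
      { rewrite nth_error_app2; last lia; rewrite nth_error_app2; last lia.
        rewrite nth_error_app2 // in e; rewrite -e; f_equal; lia. }
      exists (deriv_var e') => r /=; rewrite /env_shift.
      by case: (Nat.ltb_spec n (length G1)) => // ?; lia.
  - destruct (IH (A :: G1) erefl) as [d' Hd'].
    exists (deriv_lam d') => r /=; apply/ffunP => v; rewrite !ffunE Hd' /=.
    by rewrite env_shift_cons.
  - destruct (IH1 G1 erefl) as [d1' H1]; destruct (IH2 G1 erefl) as [d2' H2].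
    by exists (deriv_app d1' d2') => r /=; rewrite H1 H2.
Qed.

Lemma deriv_unlift G1 X G2 {t B} (d : deriv (G1 ++ X :: G2) (Defs.lift 1 (length G1) t) B) :
  exists d' : deriv (G1 ++ G2) t B,
    forall r, denote d r = denote d' (env_shift (length G1) 1 r).
Proof.
  remember (G1 ++ X :: G2) as G eqn:HG; remember (Defs.lift 1 (length G1) t) as M eqn:HM.
  revert G1 t HG HM.
  induction d as [G n A e|G a A B d IH|G a b A B d1 IH1 d2 IH2]; intros G1 t HG HM; subst G.
  - destruct (lift_var_inv (esym HM)) as [m [-> Hm]].
    destruct (Nat.ltb_spec m (length G1)) as [Hlt|Hge]; subst n.
    + assert (e' : nth_error (G1 ++ G2) m = Some A).
      { by rewrite nth_error_app1 // -(nth_error_app1 _ (X :: G2) Hlt). }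
      exists (deriv_var e') => r /=; rewrite /env_shift.
      by case: (Nat.ltb_spec m (length G1)) => // ?; lia.
    + assert (e' : nth_error (G1 ++ G2) m = Some A).
      { rewrite nth_error_app2 // -e nth_error_app2; last lia.
        by rewrite (_ : (m + 1 - length G1)%coq_nat = (m - length G1).+1) //; lia. }
      exists (deriv_var e') => r /=; rewrite /env_shift.
      by case: (Nat.ltb_spec m (length G1)) => // ?; lia.
  - destruct (lift_lam_inv (esym HM)) as [a0 [-> ->]].
    destruct (IH (A :: G1) a0 erefl erefl) as [d' Hd'].
    exists (deriv_lam d') => r /=; apply/ffunP => v; rewrite !ffunE Hd' /=.
    by rewrite env_shift_cons.
  - destruct (lift_app_inv (esym HM)) as [a0 [b0 [-> [-> ->]]]].
    destruct (IH1 G1 a0 erefl erefl) as [d1' H1]; destruct (IH2 G1 b0 erefl erefl) as [d2' H2].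
    by exists (deriv_app d1' d2') => r /=; rewrite H1 H2.
Qed.

Lemma deriv_subst G1 U G2 {t u A} (d : deriv (G1 ++ U :: G2) t A) (du : deriv G2 u U) :
  exists d' : deriv (G1 ++ G2) (Defs.subst (length G1) u t) A,
    forall r, denote d' r =
              denote d (env_insert (length G1) U (denote du (env_drop (length G1) r)) r).
Proof.
  remember (G1 ++ U :: G2) as G eqn:HG; revert G1 HG.
  induction d as [G n A e|G t A B d IH|G t u0 A B d1 IH1 d2 IH2]; intros G1 HG; subst G.
  - simpl; destruct (Nat.eqb_spec n (length G1)) as [->|Hne].
    + rewrite nth_error_app2 // Nat.sub_diag in e; injection e as ->.
      destruct (deriv_lift [] G2 G1 du) as [d' Hd'].
      exists d' => r; rewrite Hd' /= /env_insert.
      case: (Nat.ltb_spec (length G1) (length G1)) => [?|_]; first lia.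
      by rewrite Nat.eqb_refl cast_id.
    + destruct (Nat.ltb_spec (length G1) n) as [Hlt|Hge].
      * assert (e' : nth_error (G1 ++ G2) (n - 1) = Some A).
        { rewrite nth_error_app2; last lia.
          rewrite nth_error_app2 in e; last lia.
          by replace (n - length G1)%coq_nat with (n - 1 - length G1)%coq_nat.+1 in e by lia. }
        exists (deriv_var e') => r /=; rewrite /env_insert.
        case: (Nat.ltb_spec n (length G1)) => [?|_]; first lia.
        by case: (Nat.eqb_spec n (length G1)).
      * assert (e' : nth_error (G1 ++ G2) n = Some A).
        { have Hlt : (n < length G1)%coq_nat by lia.
          by rewrite nth_error_app1 // -(nth_error_app1 _ (U :: G2) Hlt). }
        exists (deriv_var e') => r /=; rewrite /env_insert.
        by case: (Nat.ltb_spec n (length G1)) => // ?; lia.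
  - destruct (IH (A :: G1) erefl) as [d' Hd'].
    exists (deriv_lam d') => r /=; apply/ffunP => v; rewrite !ffunE Hd' /=.
    by rewrite env_drop_cons env_insert_cons.
  - destruct (IH1 G1 erefl) as [d1' H1]; destruct (IH2 G1 erefl) as [d2' H2].
    by exists (deriv_app d1' d2') => r /=; rewrite H1 H2.
Qed.

Lemma step_denote {M N G A} (d : deriv G M A) : step M N ->
  exists d' : deriv G N A, forall r, denote d r = denote d' r.
Proof.
  move=> H; elim: H G A d => [t u|t|a a' b _ IH|a b b' _ IH|a a' _ IH] G C d.
  - have [U [d1 [d2 Hd]]] := deriv_app_inv d.
    have [d1' Hd1] := deriv_lam_inv d1.
    have [d' Hd'] := deriv_subst [] U G d1' d2.
    by exists d' => r; rewrite Hd Hd1 ffunE Hd' /= env_drop0 env_insert0.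
  - remember (Lam (App (Defs.lift 1 0 t) (Var 0))) as L eqn:E.
    destruct d as [| G L' A B d |]; try discriminate; injection E as ->.
    have [U [d1 [d2 Hd]]] := deriv_app_inv d.
    have [[EU] Hd2] := deriv_var_inv d2; subst U.
    have [d1' Hd1] := deriv_unlift [] A G d1.
    exists d1' => r /=; apply/ffunP => v.
    by rewrite ffunE Hd Hd1 Hd2 /= env_shift_cons0 cast_id.
  - have [U [d1 [d2 Hd]]] := deriv_app_inv d.
    have [d1' H1] := IH _ _ d1.
    by exists (deriv_app d1' d2) => r; rewrite Hd H1.
  - have [U [d1 [d2 Hd]]] := deriv_app_inv d.
    have [d2' H2] := IH _ _ d2.
    by exists (deriv_app d1 d2') => r; rewrite Hd H2.
  - remember (Lam a) as L eqn:E.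
    destruct d as [| G L' A B d |]; try discriminate; injection E as ->.
    have [d' Hd'] := IH _ _ d.
    by exists (deriv_lam d') => r /=; apply/ffunP => v; rewrite !ffunE Hd'.
Qed.

Lemma steps_denote {M N G A} (d : deriv G M A) : star step M N ->
  exists d' : deriv G N A, forall r, denote d r = denote d' r.
Proof.
  move=> H; elim: H G A d => [x y Hxy|x|x y z _ IH1 _ IH2] G A d.
  - exact: step_denote Hxy.
  - by exists d.
  - have [d1 Hd1] := IH1 _ _ d; have [d2 Hd2] := IH2 _ _ d1.
    by exists d2 => r; rewrite Hd1 Hd2.
Qed.

Definition church_sem (tau : ty) (m : nat) : sem (omega tau) :=
  [ffun f : sem (Arr tau tau) => [ffun x => iter m f x]].

Fixpoint church_body_deriv tau G m : deriv (tau :: Arr tau tau :: G) (church_body m) tau :=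
  match m with
  | 0 => @deriv_var (tau :: Arr tau tau :: G) 0 tau erefl
  | m'.+1 => deriv_app (@deriv_var (tau :: Arr tau tau :: G) 1 (Arr tau tau) erefl)
                       (church_body_deriv tau G m')
  end.

Definition church_deriv tau G m : deriv G (church m) (omega tau) :=
  deriv_lam (deriv_lam (church_body_deriv tau G m)).

Lemma denote_church_body m G tau (d : deriv (tau :: Arr tau tau :: G) (church_body m) tau) r :
  denote d r = iter m (r (Arr tau tau) 1 : sem (Arr tau tau)) (r tau 0).
Proof.
  elim: m G d r => [|m IH] G d r.
  - by case: (deriv_var_inv d).
  - have [U [d1 [d2 ->]]] := deriv_app_inv d.
    have [[EU] ->] := deriv_var_inv d1; subst U.
    by rewrite (IH _ d2).
Qed.

Lemma denote_church m G tau (d : deriv G (church m) (omega tau)) r :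
  denote d r = church_sem tau m.
Proof.
  have [d1 ->] := deriv_lam_inv d; have [d2 Hd2] := deriv_lam_inv d1.
  apply/ffunP => f; rewrite !ffunE Hd2; apply/ffunP => x; rewrite !ffunE.
  by rewrite (denote_church_body m G tau d2) /= !cast_id.
Qed.

Lemma denote_eta_church1 G tau (d : deriv G (Lam (Var 0)) (omega tau)) r :
  denote d r = church_sem tau 1.
Proof.
  have [d1 ->] := deriv_lam_inv d; have [_ Hd1] := deriv_var_inv d1.
  apply/ffunP => f; rewrite !ffunE Hd1 /= cast_id.
  by apply/ffunP => x; rewrite ffunE.
Qed.

Lemma conv_church_sem G E tau (dE : deriv G E (Arr (omega tau) (omega tau))) r n m :
  conv (App E (church n)) (church m) -> denote dE r (church_sem tau n) = church_sem tau m.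
Proof.
  move=> /conv_join [Q [HEQ HmQ]].
  have [dQ HdQ] := steps_denote (deriv_app dE (church_deriv tau G n)) HEQ.
  have -> : denote dE r (church_sem tau n) = denote (deriv_app dE (church_deriv tau G n)) r.
  { by rewrite -(denote_church n G tau (church_deriv tau G n) r). }
  rewrite HdQ.
  case: (church_reducts HmQ) => [EQ|[-> EQ]]; subst Q.
  - exact: denote_church.
  - exact: denote_eta_church1.
Qed.

Definition church_sem_succ tau (c : sem (omega tau)) : sem (omega tau) :=
  [ffun f : sem (Arr tau tau) => [ffun x => f ((c f : sem (Arr tau tau)) x)]].

Lemma church_semS tau n : church_sem tau n.+1 = church_sem_succ tau (church_sem tau n).
Proof. by apply/ffunP => f; rewrite !ffunE; apply/ffunP => x; rewrite !ffunE. Qed.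

Fixpoint negate (A : ty) : sem A -> sem A :=
  match A return sem A -> sem A with
  | o => negb
  | Arr A B => fun g => [ffun v => negate B ((g : sem (Arr A B)) v)]
  end.

Lemma negate_neq A x : negate A x <> x.
Proof.
  elim: A x => [[]//|A1 _ A2 IH2] g Eg.
  by apply: (IH2 (g (inhabitant A1))); rewrite -{2}Eg ffunE.
Qed.

Lemma church_sem_neq_succ tau n : church_sem tau n <> church_sem tau n.+1.
Proof.
  move=> /(congr1 (fun c : sem (omega tau) =>
                     (c [ffun x => negate tau x] : sem (Arr tau tau)) (inhabitant tau))).
  by rewrite !ffunE iterS ffunE => /esym; apply: negate_neq.
Qed.

Theorem proposition3 :
  ~ strictly_definable 1 (fun ns => Nat.div2 (hd 0 ns)).
Proof.
  move=> [tau [E [HE Hdiv]]].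
  have [dE] := has_type_deriv HE.
  pose half (c : sem (omega tau)) := denote dE (fun A _ => inhabitant A) c.
  apply: (@nat_not_injective_fin _ (church_sem tau)).
  apply: (halving_injective (church_sem tau) (church_sem_succ tau) half).
  - exact: church_semS.
  - by move=> n; apply: conv_church_sem; apply: (Hdiv [n]).
  - exact: church_sem_neq_succ.
Qed.
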